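(* For any constant $C$ and any $a>-1$, the integral operator on $L^2[0,1]$ with kernel $$k_C(x,y)=C\exp\Big[C(\log(1/x))^{3/4}+C(\log(1/y))^{3/4}\Big]\frac{y^{a/2}}{x^{(a+1)/2}}\mathbf 1_{y<x}$$ is Hilbert–Schmidt. *)

From HB Require Import structures.
From mathcomp Require Import all_boot all_order all_algebra.
From mathcomp Require Import all_classical all_reals all_analysis.
Set Implicit Arguments. Unset Strict Implicit. Unset Printing Implicit Defensive.
Import Order.TTheory GRing.Theory Num.Theory.
Import numFieldNormedType.Exports.
Local Open Scope classical_set_scope.
Local Open Scope ring_scope.

Definition kC (R : realType) (C a : R) (x y : R) : R :=
  C * expR (C * (ln (x^-1)) `^ (3/4) + C * (ln (y^-1)) `^ (3/4))
    * (y `^ (a / 2)) / (x `^ ((a + 1) / 2))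
    * (if y < x then 1 else 0).

(* The integral operator on L^2[0,1] with kernel K is Hilbert-Schmidt,
   i.e. K belongs to L^2([0,1]^2) (w.r.t. the product Lebesgue measure):
   K is measurable on [0,1]^2 and |K|^2 has finite integral there. *)
Definition hilbert_schmidt_kernel (R : realType) (K : R -> R -> R) : Prop :=
  ((@lebesgue_measure R) \x (@lebesgue_measure R))%E.-integrable
    (`[0, 1] `*` `[0, 1]) (fun z : R * R => ((K z.1 z.2) ^+ 2)%:E).

From HB Require Import structures.
From mathcomp Require Import all_boot all_order all_algebra.
From mathcomp Require Import all_classical all_reals all_analysis.
From mathcomp Require Import measurable_realfun lebesgue_integral_fubini.
From mathcomp Require Import ring lra.
Import Order.TTheory GRing.Theory Num.Theory.
Import numFieldNormedType.Exports.
Local Open Scope classical_set_scope.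
Local Open Scope ring_scope.

(* With u = log(1/x) and v = log(1/y), on the support y < x of the kernel we
   have 0 <= u < v and k_C^2 = C^2 exp(2C u^{3/4} + 2C v^{3/4} + (a+1) u - a v).
   As L^{3/4} is sublinear, 2C L^{3/4} <= e L + M for every e > 0, and since
   u < v the exponent is at most 2M + 3e u + (1 - e) v once 2e <= a + 1.  Hence
   k_C^2 <= K x^{-3e} y^{e-1}, and for small e both exponents exceed -1, so the
   dominating function is integrable on [0,1]^2 by Tonelli. *)

Section product_integrable.
Context {d1 d2 : measure_display}.
Context {T1 : measurableType d1} {T2 : measurableType d2}.
Context {R : realType} {m1 : {sigma_finite_measure set T1 -> \bar R}}
  {m2 : {sigma_finite_measure set T2 -> \bar R}}.

Lemma integrable_tensorT (f : T1 -> R) (g : T2 -> R) :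
  m1.-integrable setT (EFin \o f) -> m2.-integrable setT (EFin \o g) ->
  (m1 \x m2)%E.-integrable setT (fun z => (f z.1 * g z.2)%:E).
Proof.
move=> /integrableP[/measurable_EFinP mf if_].
move=> /integrableP[/measurable_EFinP mg ig].
have mfg : measurable_fun setT (fun z : T1 * T2 => f z.1 * g z.2).
  by apply: measurable_funM; [exact: measurableT_comp mf measurable_fst|
                              exact: measurableT_comp mg measurable_snd].
apply/integrable12ltyP; first exact/measurable_EFinP.
have mabsf : measurable_fun setT (fun x => `|f x|%:E : \bar R).
  exact/measurable_EFinP/measurableT_comp.
have mabsg : measurable_fun setT (fun y => `|g y|%:E : \bar R).
  exact/measurable_EFinP/measurableT_comp.
under eq_integral => x _.
  under eq_integral => y _ do rewrite /= normrM EFinM.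
  rewrite ge0_integralZl//.
  over.
rewrite /= ge0_integralZr//; last exact: integral_ge0.
move: if_ ig => /= if_ ig.
by rewrite lte_mul_pinfty ?integral_ge0// ge0_fin_numE ?integral_ge0.
Qed.

Lemma integrable_tensor (A : set T1) (B : set T2) (f : T1 -> R) (g : T2 -> R) :
  measurable A -> measurable B ->
  m1.-integrable A (EFin \o f) -> m2.-integrable B (EFin \o g) ->
  (m1 \x m2)%E.-integrable (A `*` B) (fun z => (f z.1 * g z.2)%:E).
Proof.
move=> mA mB /(integrable_mkcond _ mA) + /(integrable_mkcond _ mB).
rewrite !restrict_EFin => ifA igB.
apply/(integrable_mkcond _ (measurableX mA mB)).
suff -> : (fun z => (f z.1 * g z.2)%:E) \_ (A `*` B) =
          (fun z => ((f \_ A) z.1 * (g \_ B) z.2)%:E).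
  exact: integrable_tensorT.
apply/funext => -[x y]; rewrite !patchE in_setX /=.
by case: (x \in A); case: (y \in B); rewrite /= ?mul0r ?mulr0.
Qed.
End product_integrable.

Section powR.
Context {R : realType}.

Lemma integral_powR_itv (p a b : R) : p != -1 -> 0 < a -> a < b ->
  (\int[lebesgue_measure]_(x in `[a, b]) (x `^ p)%:E =
   ((p + 1)^-1 * b `^ (p + 1))%:E - ((p + 1)^-1 * a `^ (p + 1))%:E)%E.
Proof.
move=> p1 a0 ab; have p10 : p + 1 != 0 by rewrite addr_eq0.
pose F x : R := (p + 1)^-1 * x `^ (p + 1).
have dF (x : R) : 0 < x ->
    is_derive x 1 F ((p + 1)^-1 * ((p + 1) * x `^ (p + 1 - 1))).
  by move=> x0; apply: is_deriveZ; exact: is_derive1_powR.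
have b0 := lt_trans a0 ab.
apply: (continuous_FTC2 (F := F)) => //.
- apply: derivable_within_continuous => x; rewrite in_itv/= => /andP[ax _].
  by apply: derivable_powR; rewrite in_itv/= (lt_le_trans a0 ax).
- split => [x||].
  + by rewrite in_itv/= => /andP[ax _]; have [] := dF x (lt_trans a0 ax).
  + apply/cvg_at_right_filter/differentiable_continuous/derivable1_diffP.
    by have [] := dF a a0.
  + apply/cvg_at_left_filter/differentiable_continuous/derivable1_diffP.
    by have [] := dF b b0.
- move=> x; rewrite in_itv/= => /andP[ax _]; rewrite derive1E.
  by have [_ ->] := dF x (lt_trans a0 ax); rewrite addrK mulKf.
Qed.

Lemma integrable_powR_itv01 (p : R) : -1 < p ->
  (@lebesgue_measure R).-integrable `[0, 1] (fun t => (t `^ p)%:E).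
Proof.
move=> p1; have p10 : 0 < p + 1 by lra.
have mf : measurable_fun setT (fun t : R => (t `^ p)%:E).
  by apply/measurable_EFinP; exact: measurable_powR.
apply/integrableP; split; first exact: measurable_funS mf.
under eq_integral do rewrite gee0_abs ?lee_fin ?powR_ge0//.
rewrite -integral_itv_obnd_cbnd; last exact: measurable_funS mf.
pose g n := (fun t : R => (t `^ p)%:E) \_ `[n.+2%:R^-1, 1].
have g0 n t : (0 <= g n t)%E.
  by rewrite /g patchE; case: ifP; rewrite ?lee_fin ?powR_ge0.
have mg n : measurable_fun (`]0, 1] : set R) (g n).
  by apply/measurable_restrict => //; exact: measurable_funS mf.
have g_nd t : nondecreasing_seq (g ^~ t).
  move=> m n mn; rewrite /g !patchE; case: ifPn => [|_].
    rewrite !inE/= !in_itv/= => /andP[mt t1]; rewrite mem_set//= in_itv/= t1.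
    by rewrite andbT (le_trans _ mt)// lef_pV2 ?posrE// ler_nat.
  by case: ifP; rewrite ?lee_fin ?powR_ge0.
have g_lim t : t \in `]0, 1] -> limn (g ^~ t) = (t `^ p)%:E.
  rewrite in_itv/= => /andP[t0 t1]; apply/cvg_lim => //; apply: cvg_near_cst.
  exists (Num.truncn t^-1) => // n /= tn.
  rewrite /g patchE mem_set// /= in_itv/= t1 andbT -[t]invrK.
  rewrite lef_pV2 ?posrE ?invr_gt0// ltW// (lt_le_trans (truncnS_gt _))//.
  by rewrite ler_nat ltnS (leq_trans tn).
rewrite (@eq_integral _ _ _ (@lebesgue_measure R) _ (fun t => limn (g ^~ t)));
  last by move=> t /[!inE] /g_lim ->.
rewrite monotone_convergence//.
apply: le_lt_trans (ltry (p + 1)^-1); apply: lime_le.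
  apply: ereal_nondecreasing_is_cvgn => m n mn.
  apply: ge0_le_integral => //; [exact: mg|exact: mg|].
  by move=> t _; exact: g_nd.
apply: nearW => n; rewrite -integral_mkcondr setIidr; last first.
  move=> t /=; rewrite !in_itv/= => /andP[+ ->]; rewrite andbT.
  by apply: lt_le_trans; rewrite invr_gt0.
rewrite integral_powR_itv ?invr_gt0 ?invf_lt1 ?ltr1n//; last lra.
by rewrite powR1 mulr1 -EFinB lee_fin gerBl mulr_ge0 ?powR_ge0// invr_ge0 ltW.
Qed.

Lemma powR_sublinear (r c e : R) : 0 <= r < 1 -> 0 < e ->
  exists M, forall L, 0 <= L -> c * L `^ r <= e * L + M.
Proof.
move=> /andP[r0 r1] e0.
have [c_le0|c_gt0] := leP c 0.
  exists 0 => L L_ge0; rewrite addr0 (@le_trans _ _ 0)//.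
    exact: mulr_le0_ge0 (powR_ge0 _ _).
  exact: mulr_ge0 (ltW e0) L_ge0.
have ce0 : 0 <= c / e by rewrite divr_ge0 ?ltW.
pose L0 := (c / e) `^ (1 - r)^-1.
exists (c * L0 `^ r) => L L_ge0.
have [LL0|L0L] := leP L L0.
  rewrite -[leLHS]add0r; apply: lerD; first exact: mulr_ge0 (ltW e0) L_ge0.
  by rewrite ler_pM2l// ge0_ler_powR// nnegrE powR_ge0.
suff : c * L `^ r <= e * L.
  by move/le_trans; apply; rewrite lerDl mulr_ge0 ?powR_ge0 ?ltW.
have L_gt0 : 0 < L := le_lt_trans (powR_ge0 _ _) L0L.
have -> : e * L = e * L `^ (1 - r) * L `^ r.
  by rewrite -mulrA -powRD ?subrK ?powRr1 ?ltW ?gt_eqF ?implybT.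
rewrite ler_wpM2r ?powR_ge0// -ler_pdivrMl// mulrC.
have -> : c / e = L0 `^ (1 - r).
  by rewrite -powRrM mulVf ?powRr1// subr_eq0 gt_eqF.
by rewrite ge0_ler_powR ?subr_ge0 ?ltW// nnegrE powR_ge0.
Qed.
End powR.

Section kernel.
Context {R : realType}.

Lemma ln_inv (x : R) : ln x^-1 = - ln x.
Proof.
have [x_gt0|x_le0] := ltP 0 x; first by rewrite lnV ?posrE.
by rewrite !ln0 ?oppr0 ?invr_le0.
Qed.

Lemma kC_separated (C a x y : R) : kC C a x y =
  C * expR (C * (- ln x) `^ (3/4)) * x `^ (- ((a + 1) / 2)) *
  (expR (C * (- ln y) `^ (3/4)) * y `^ (a / 2)) * (if y < x then 1 else 0).
Proof. by rewrite /kC !ln_inv expRD powRN; ring. Qed.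

Lemma measurable_kC (C a : R) :
  measurable_fun setT (fun z : R * R => kC C a z.1 z.2).
Proof.
have mE (c : R) :
    measurable_fun setT (fun x : R => expR (c * (- ln x) `^ (3/4))).
  apply: measurableT_comp (@measurable_expR R) _.
  apply: measurable_funM; first exact: measurable_cst.
  apply: measurableT_comp (measurable_powR _) _.
  exact: measurableT_comp (@oppr_measurable R _) (@measurable_ln R).
have mf : measurable_fun setT
    (fun x : R => C * expR (C * (- ln x) `^ (3/4)) * x `^ (- ((a + 1) / 2))).
  by apply: measurable_funM; [apply: measurable_funM|exact: measurable_powR].
have mg : measurable_fun setT
    (fun y : R => expR (C * (- ln y) `^ (3/4)) * y `^ (a / 2)).
  by apply: measurable_funM; [|exact: measurable_powR].
under eq_fun do rewrite kC_separated.
apply: measurable_funM; first apply: measurable_funM.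
- exact: measurableT_comp mf measurable_fst.
- exact: measurableT_comp mg measurable_snd.
- apply: measurable_fun_ifT; last 2 first; [exact: measurable_cst..|].
  exact: measurable_fun_ltr measurable_snd measurable_fst.
Qed.

Lemma kC_sqr_le (C a e M x y : R) : 0 < e -> 2 * e <= a + 1 ->
  (forall L, 0 <= L -> 2 * C * L `^ (3/4) <= e * L + M) ->
  x <= 1 -> 0 < y ->
  kC C a x y ^+ 2 <= C ^+ 2 * expR (2 * M) * (x `^ (- (3 * e)) * y `^ (e - 1)).
Proof.
move=> e_gt0 ea sublinC x_le1 y_gt0.
have rhs_ge0 : 0 <= C ^+ 2 * expR (2 * M) * (x `^ (- (3 * e)) * y `^ (e - 1)).
  by apply: mulr_ge0; apply: mulr_ge0; rewrite ?sqr_ge0 ?expR_ge0 ?powR_ge0.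
rewrite kC_separated; case: ltP => [yx|_]; last by rewrite mulr0 expr0n.
have x_gt0 := lt_trans y_gt0 yx.
have ln_yx : ln y < ln x by rewrite ltr_ln ?posrE.
have ln_x_le0 : ln x <= 0 := ln_le0 x_le1.
have powRE (z s : R) : 0 < z -> z `^ s = expR (s * ln z).
  by move=> ?; rewrite /powR gt_eqF.
rewrite !(powRE x)// !(powRE y)// mulr1.
rewrite -!mulrA -!expRD exprMn -expRM_natl [leRHS]mulrA -expr2.
apply: ler_wpM2l; first exact: sqr_ge0.
rewrite ler_expR.
have := sublinC (- ln x) ltac:(lra); have := sublinC (- ln y) ltac:(lra).
have : 0 <= (a + 1 - 2 * e) * (ln x - ln y) by apply: mulr_ge0; lra.
lra.
Qed.

Lemma kC_sqr_dominated (C a : R) : -1 < a -> exists K q p : R,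
  [/\ -1 < q, -1 < p & forall x y, x <= 1 -> 0 < y ->
    kC C a x y ^+ 2 <= K * (x `^ q * y `^ p)].
Proof.
move=> ha; pose e := (a + 1) / (4 * (a + 2)).
have e_gt0 : 0 < e by rewrite divr_gt0; lra.
have e_lt : 3 * e < 1 by rewrite mulrA ltr_pdivrMr; lra.
have e_le : 2 * e <= a + 1 by rewrite mulrA ler_pdivrMr; nra.
have [M hM] : exists M, forall L, 0 <= L -> 2 * C * L `^ (3/4) <= e * L + M.
  by apply: powR_sublinear => //; apply/andP; split; lra.
exists (C ^+ 2 * expR (2 * M)), (- (3 * e)), (e - 1); split; [lra|lra|].
by move=> x y; exact: kC_sqr_le.
Qed.
End kernel.

Theorem proposition1 (R : realType) (C a : R) (ha : -1 < a) :
  hilbert_schmidt_kernel (kC C a).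
Proof.
have [K [q [p [q_gt p_gt kC_le]]]] := kC_sqr_dominated C a ha.
have mI : measurable (`[0, 1] : set (measurableTypeR R)).
  exact: measurable_itv.
have mD := measurableX mI mI.
pose N := `[0, 1] `*` [set 0] : set (measurableTypeR R * measurableTypeR R).
have mN : measurable N by apply: measurableX => //; exact: measurable_set1.
have N0 : ((@lebesgue_measure R) \x (@lebesgue_measure R))%E N = 0%E.
  rewrite product_measure1E//; apply/eqP; rewrite mule_eq0; apply/orP; right.
  exact/eqP/lebesgue_measure_set1.
have mk : measurable_fun setT
    (fun z : measurableTypeR R * measurableTypeR R => (kC C a z.1 z.2 ^+ 2)%:E).
  by apply/measurable_EFinP/measurable_funX; exact: measurable_kC.
(* The bound of kC_sqr_dominated needs y > 0: at y = 0 the junk values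
   ln 0 = 0 and 0 `^ 0 = 1 can make kC nonzero, so drop the null set y = 0. *)
apply/(negligible_integrable mN mD _ N0).2; first exact: measurable_funS mk.
have mDN := measurableD mD mN.
apply: (@le_integrable _ _ _ _ _ mDN _
  (fun z : R * R => (K%:E * (z.1 `^ q * z.2 `^ p)%:E)%E)).
- exact: measurable_funS mk.
- move=> [x y] [[/= /[!in_itv]/= /andP[x0 x1] /andP[y0 _]] Nxy].
  have y_gt0 : 0 < y.
    rewrite lt_neqAle y0 andbT eq_sym; apply/eqP => y_eq0.
    by apply: Nxy; split => //=; rewrite in_itv/= x0 x1.
  have kC_le_xy := kC_le x y x1 y_gt0.
  by rewrite lee_fin !ger0_norm ?sqr_ge0// (le_trans (sqr_ge0 _) kC_le_xy).
- apply: (integrableS mD mDN) => //; apply: integrableZl => //.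
  by apply: (integrable_tensor _ _ (fun x : measurableTypeR R => x `^ q)
    (fun y : measurableTypeR R => y `^ p) mI mI); exact: integrable_powR_itv01.
Qed.
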